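(* Let $s\le k$ be positive integers and let $\tau_1,\dots,\tau_k\in[0,1]$ be distinct abscissae. Let $\ell_j$, $j=1,\dots,k$, be the Lagrange polynomials of degree $k-1$ on the nodes $\{\tau_i\}$, and let $\mathcal A=(\alpha_{ij})\in\mathbb R^{k\times k}$ with $\alpha_{ij}=\int_0^{\tau_i}\ell_j(x)\,\mathrm{d}x$ and $\omega_j=\int_0^1\ell_j(x)\,\mathrm{d}x$ (so $(\tau,\mathcal A,\omega)$ is the $k$-stage collocation Runge-Kutta method at these nodes). Let $P_j(t)=\sqrt{2j-1}\,\hat P_{j-1}(t)$, where $\hat P_{j-1}$ is the shifted Legendre polynomial of degree $j-1$ on $[0,1]$, let $\Omega=\mathrm{diag}(\omega_1,\dots,\omega_k)$, and let $\mathcal P_s,\mathcal I_s\in\mathbb R^{k\times s}$ have entries $(\mathcal P_s)_{ij}=P_j(\tau_i)$ and $(\mathcal I_s)_{ij}=\int_0^{\tau_i}P_j(x)\,\mathrm{d}x$. Suppose that the quadrature formula with nodes $\tau_i$ and weights $\omega_i$ is exact for polynomials of degree at least $2s-1$. Then the Runge-Kutta method with abscissae $\tau_1,\dots,\tau_k$, weights $\omega_1,\dots,\omega_k$ and Butcher matrix $A=\mathcal A\,\mathcal P_s\,\mathcal P_s^T\,\Omega$ is the HBVM$(k,s)$ method based at the abscissae $\{\tau_i\}$, i.e. $\mathcal A\,\mathcal P_s\,\mathcal P_s^T\,\Omega=\mathcal I_s\,\mathcal P_s^T\,\Omega$.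
   Context: HBVM$(k,s)$ (Hamiltonian Boundary Value Method with $k$ steps and degree $s$) based at abscissae $\tau_1,\dots,\tau_k$ with weights $\omega_1,\dots,\omega_k$ is the Runge-Kutta method whose Butcher tableau has abscissae $\tau_i$, weights $\omega_i$, and Butcher matrix $\mathcal I_s\,\mathcal P_s^T\,\Omega$, with $\mathcal I_s,\mathcal P_s,\Omega$ as defined in the claim. *)

From HB Require Import structures.
From mathcomp Require Import all_boot all_order all_algebra.
From mathcomp Require Import reals.
Set Implicit Arguments. Unset Strict Implicit. Unset Printing Implicit Defensive.
Import Order.TTheory GRing.Theory Num.Theory.
Local Open Scope ring_scope.

Section Defs.
Variable R : realType.

Definition pint (p : {poly R}) (a b : R) : R :=
  \sum_(i < size p) p`_i * (b ^+ i.+1 - a ^+ i.+1) / (i.+1)%:R.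

Definition lagrange (k : nat) (tau : 'I_k -> R) (j : 'I_k) : {poly R} :=
  \prod_(m < k | m != j) (('X - (tau m)%:P) * ((tau j - tau m)^-1)%:P).

(* Shifted Legendre polynomial of degree n on [0,1] (Rodrigues formula):
   hatP_n(x) = 1/n! d^n/dx^n (x^2 - x)^n. *)
Definition shifted_legendre (n : nat) : {poly R} :=
  (n`!%:R)^-1 *: ((('X ^+ 2 - 'X) ^+ n)^`(n)).

Definition legP (j : nat) : {poly R} :=
  Num.sqrt ((2 * j)%:R - 1) *: shifted_legendre j.-1.

Definition colloc_A (k : nat) (tau : 'I_k -> R) : 'M[R]_k :=
  \matrix_(i, j) pint (lagrange tau j) 0 (tau i).

Definition colloc_w (k : nat) (tau : 'I_k -> R) (j : 'I_k) : R :=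
  pint (lagrange tau j) 0 1.

Definition Omega_mx (k : nat) (tau : 'I_k -> R) : 'M[R]_k :=
  diag_mx (\row_j colloc_w tau j).

(* (P_s)_{ij} = P_j(tau_i), j = 1..s  (column index j : 'I_s stands for j+1). *)
Definition Ps_mx (k s : nat) (tau : 'I_k -> R) : 'M[R]_(k, s) :=
  \matrix_(i, j) (legP j.+1).[tau i].

Definition Is_mx (k s : nat) (tau : 'I_k -> R) : 'M[R]_(k, s) :=
  \matrix_(i, j) pint (legP j.+1) 0 (tau i).

End Defs.

From Pilot Require Import Defs.
From HB Require Import structures.
From mathcomp Require Import all_boot all_order all_algebra.
From mathcomp Require Import reals.
From mathcomp Require Import zify.
Set Implicit Arguments.
Unset Strict Implicit.
Unset Printing Implicit Defensive.

Import Order.TTheory GRing.Theory Num.Theory.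
Local Open Scope ring_scope.

(* Every polynomial p of degree < k equals its Lagrange interpolant on the k
   distinct nodes, so the collocation matrix integrates it exactly from its
   nodal values: sum_j alpha_ij p(tau_j) = int_0^{tau_i} p.  The columns of
   P_s are the values of P_1, ..., P_s, of degree < s <= k, hence already
   A P_s = I_s, and the identity follows by multiplying on the right by
   P_s^T Omega. *)

Section PolyIntegral.
Variable R : realType.

Lemma pint_widen {p : {poly R}} {n} a b : (size p <= n)%N ->
  pint p a b = \sum_(i < n) p`_i * (b ^+ i.+1 - a ^+ i.+1) / (i.+1)%:R.
Proof.
move=> le_p_n; rewrite /pint.
rewrite (big_ord_widen n (fun i => p`_i * (b ^+ i.+1 - a ^+ i.+1) / i.+1%:R)) //.
rewrite big_mkcond; apply: eq_bigr => i _.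
by case: ltnP => // le_p_i; rewrite nth_default // !mul0r.
Qed.

Lemma pint0 a b : pint (0 : {poly R}) a b = 0.
Proof. by rewrite /pint size_poly0 big_ord0. Qed.

Lemma pintD a b (p q : {poly R}) : pint (p + q) a b = pint p a b + pint q a b.
Proof.
rewrite (pint_widen a b (size_polyD p q)).
rewrite (pint_widen a b (leq_maxl (size p) (size q))).
rewrite (pint_widen a b (leq_maxr (size p) (size q))) -big_split /=.
by apply: eq_bigr => i _; rewrite coefD !mulrDl.
Qed.

Lemma pintZ a b c (p : {poly R}) : pint (c *: p) a b = c * pint p a b.
Proof.
rewrite (pint_widen a b (size_scale_leq c p)) /pint mulr_sumr.
by apply: eq_bigr => i _; rewrite coefZ !mulrA.
Qed.

Lemma pint_sum (I : finType) (c : I -> R) (q : I -> {poly R}) a b :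
  pint (\sum_j c j *: q j) a b = \sum_j c j * pint (q j) a b.
Proof.
rewrite (big_morph (fun p => pint p a b) (pintD a b) (pint0 a b)).
by apply: eq_bigr => j _; rewrite pintZ.
Qed.

End PolyIntegral.

Section Lagrange.
Variables (R : realType) (k : nat) (tau : 'I_k -> R).

Lemma size_lagrange j : (size (Defs.lagrange tau j) <= k)%N.
Proof.
rewrite /Defs.lagrange; under eq_bigr do rewrite mulrC mul_polyC.
rewrite scaler_prod (leq_trans (size_scale_leq _ _)) //.
rewrite -(big_enum _ _ (predC1 j)) size_prod_XsubC -cardE cardC1 card_ord.
by rewrite prednK // (leq_ltn_trans _ (ltn_ord j)).
Qed.

Hypothesis tau_inj : injective tau.

Lemma lagrange_node i j : (Defs.lagrange tau j).[tau i] = (i == j)%:R.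
Proof.
rewrite /Defs.lagrange horner_prod; have [->|neq_ij] := eqVneq i j.
  apply: big1 => m neq_mj; rewrite hornerM hornerXsubC hornerC mulfV //.
  by rewrite subr_eq0 (inj_eq tau_inj) eq_sym.
by rewrite (bigD1 i neq_ij) /= hornerM hornerXsubC subrr !mul0r.
Qed.

Lemma lagrange_interp (p : {poly R}) : (size p <= k)%N ->
  p = \sum_j p.[tau j] *: Defs.lagrange tau j.
Proof.
move=> le_p_k; apply/subr0_eq.
apply: (@roots_geq_poly_eq0 _ _ [seq tau i | i <- enum 'I_k]).
- apply/allP => _ /mapP [i _ ->]; rewrite /root hornerD hornerN horner_sum.
  under eq_bigr do rewrite hornerZ lagrange_node.
  rewrite (bigD1 i) //= eqxx mulr1 big1 ?addr0 ?subrr // => m.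
  by rewrite eq_sym => /negbTE ->; rewrite mulr0.
- by rewrite map_inj_uniq // enum_uniq.
- rewrite size_map size_enum_ord (leq_trans (size_polyD _ _)) //.
  rewrite size_polyN geq_max le_p_k (leq_trans (size_sum _ _ _)) //.
  apply/bigmax_leqP => j _.
  exact: leq_trans (size_scale_leq _ _) (size_lagrange j).
Qed.

Lemma colloc_A_exact i {p : {poly R}} : (size p <= k)%N ->
  \sum_j colloc_A tau i j * p.[tau j] = pint p 0 (tau i).
Proof.
move=> le_p_k; rewrite [in RHS](lagrange_interp le_p_k) pint_sum.
by apply: eq_bigr => j _; rewrite mxE mulrC.
Qed.

End Lagrange.

Lemma size_shifted_legendre (R : realType) n :
  (size (shifted_legendre R n) <= n.+1)%N.
Proof.
rewrite (leq_trans (size_scale_leq _ _)) //.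
have size_base : (size ('X ^+ 2 - 'X : {poly R})).-1 = 2%N.
  by rewrite size_polyDl ?size_polyXn // size_polyN size_polyX.
have := size_poly_exp_leq ('X ^+ 2 - 'X : {poly R}) n.
rewrite size_base => le_pow.
apply/leq_sizeP => j le_n1_j; rewrite coef_derivn nth_default ?mul0rn //.
by apply: leq_trans le_pow _; lia.
Qed.

Lemma size_legP (R : realType) n : (size (legP R n.+1) <= n.+1)%N.
Proof. exact: leq_trans (size_scale_leq _ _) (size_shifted_legendre R n). Qed.

Lemma colloc_A_mul_Ps (R : realType) (k s : nat) (tau : 'I_k -> R) :
  (s <= k)%N -> injective tau -> colloc_A tau *m Ps_mx s tau = Is_mx s tau.
Proof.
move=> le_s_k tau_inj; apply/matrixP => i l; rewrite !mxE.
have le_l_k : (size (legP R l.+1) <= k)%N.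
  exact: leq_trans (size_legP R l) (leq_trans (ltn_ord l) le_s_k).
rewrite -(colloc_A_exact tau_inj i le_l_k).
by apply: eq_bigr => j _; rewrite [Ps_mx _ _ _ _]mxE.
Qed.

Theorem theorem2 (R : realType) (k s : nat) (tau : 'I_k -> R) :
  (0 < s)%N -> (s <= k)%N ->
  injective tau ->
  (forall i, 0 <= tau i <= 1) ->
  (forall p : {poly R}, (size p <= 2 * s)%N ->
     \sum_(i < k) colloc_w tau i * p.[tau i] = pint p 0 1) ->
  colloc_A tau *m Ps_mx s tau *m (Ps_mx s tau)^T *m Omega_mx tau
  = Is_mx s tau *m (Ps_mx s tau)^T *m Omega_mx tau.
Proof. by move=> _ le_s_k tau_inj _ _; rewrite colloc_A_mul_Ps. Qed.
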